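(* Let $k \ge 0$, let $G_i$ and $G_j$ be two node-labeled graphs with node coloring $l$, and let $F^{(k)}$ be a function assigning to each node $v \in V(G_i) \cup V(G_j)$ a vector $F^{(k)}(v) \in \mathbb{R}^{d}$ such that for all nodes $u, v \in V(G_i) \cup V(G_j)$, $c_l^{(k)}(u)=c_l^{(k)}(v) \Longleftrightarrow F^{(k)}(u) = F^{(k)}(v)$. Let $f_G$ be a function mapping countable multisets of elements of $\mathbb{R}^d$ to $\mathbb{R}^{d_G}$, and define $F^{(k)}_G(G) = f_G(\{\!\{F^{(k)}(v) \mid v \in V(G)\}\!\})$. Put $\mathcal{A}=\{\!\{F^{(k)}(v) \mid v \in V(G_i)\}\!\}$ and $\mathcal{B}=\{\!\{F^{(k)}(v) \mid v \in V(G_j)\}\!\}$. If $$f_G(\mathcal{A}) = f_G(\mathcal{B}) \Longrightarrow \mathcal{A} = \mathcal{B},$$ then $$F^{(k)}_G(G_i)=F^{(k)}_G(G_j) \Longleftrightarrow C_l^{(k)}(G_i) = C_l^{(k)}(G_j).$$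
   Context: A graph $G=(V,E)$ has a finite node set $V$ and edges $E \subseteq \{\{u,v\} \subseteq V\}$; the neighborhood of $v$ is $N(v)=\{u \in V \mid \{v,u\} \in E\}$. A node coloring (labeling) is a function $l$ from nodes to a set of colors. Multisets are written $\{\!\{\dots\}\!\}$. 1-WL coloring: set $c_l^{(0)} = l$ and for $t>0$, $c_l^{(t)}(v) = \mathrm{HASH}\big(c_l^{(t-1)}(v), \{\!\{c_l^{(t-1)}(u) \mid u \in N(v)\}\!\}\big)$, where $\mathrm{HASH}$ is an injective map sending each such pair to a value not used in earlier iterations (the same map is used for all graphs considered). For a graph $G$, $C_l^{(t)}(G) = \{\!\{c_l^{(t)}(v) \mid v \in V(G)\}\!\}$. *)

From mathcomp Require Import all_boot all_order all_algebra.
From mathcomp Require Import reals.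
Set Implicit Arguments. Unset Strict Implicit. Unset Printing Implicit Defensive.

Record lgraph (C : Type) := LGraph {
  node : finType;
  adj : rel node;
  adj_sym : symmetric adj;
  adj_irr : irreflexive adj;
  lab : node -> C
}.

(* Multisets are represented as sequences up to permutation (perm_eq). *)

Definition hash_injective (C : eqType) (HASH : C -> seq C -> C) : Prop :=
  forall a b s s', HASH a s = HASH b s' <-> (a = b /\ perm_eq s s').

Fixpoint wl (C : eqType) (HASH : C -> seq C -> C) (G : lgraph C) (t : nat)
  : node G -> C :=
  match t with
  | 0 => @lab C G
  | t'.+1 => fun v => HASH (wl HASH t' v)
                          [seq wl HASH t' u | u <- enum (node G) & adj v u]
  end.
Arguments wl {C} HASH G t _.

Definition wl_multiset (C : eqType) (HASH : C -> seq C -> C) (G : lgraph C)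
  (t : nat) : seq C := [seq wl HASH G t v | v <- enum (node G)].

Definition multiset_fun (T U : eqType) (f : seq T -> U) : Prop :=
  forall s s', perm_eq s s' -> f s = f s'.

From mathcomp Require Import all_boot all_order all_algebra.
From mathcomp Require Import reals.

Set Implicit Arguments.
Unset Strict Implicit.
Unset Printing Implicit Defensive.

(* The WL colouring and the feature map [F] induce the same partition of the
   disjoint union of the node sets, and two maps with the same fibres give the
   same answer to "are these two multisets of images equal?".  Hence
   C(Gi) = C(Gj) iff A = B, and A = B iff fG A = fG B by permutation
   invariance of [fG] and the injectivity hypothesis. *)

(* [F] factors as [phi \o g] through an arbitrary representative of each
   [g]-fibre, so a permutation of [g]-images maps to one of [F]-images. *)
Lemma perm_map_coarser (T : finType) (X Y : eqType) (g : T -> X) (F : T -> Y)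
    (s t : seq T) :
  (forall u v, g u = g v -> F u = F v) ->
  perm_eq (map g s) (map g t) -> perm_eq (map F s) (map F t).
Proof.
move=> gF gst.
pose phi c := omap F [pick u | g u == c].
have phi_g u : phi (g u) = Some (F u).
  rewrite /phi; case: pickP => [u' /eqP /gF <- // | /(_ u)].
  by rewrite eqxx.
have phi_gE : Some \o F =1 phi \o g by move=> u; rewrite /= phi_g.
apply: (perm_map_inj (@Some_inj _)).
rewrite -!map_comp !(eq_map phi_gE) !(map_comp phi g).
exact: (perm_map phi gst).
Qed.

Lemma perm_map_same_partition (T : finType) (X Y : eqType)
    (g : T -> X) (F : T -> Y) (s t : seq T) :
  (forall u v, g u = g v <-> F u = F v) ->
  perm_eq (map g s) (map g t) = perm_eq (map F s) (map F t).
Proof.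
move=> gF; apply/idP/idP; apply: perm_map_coarser => u v /gF //.
Qed.

Theorem proposition3p5 (R : realType) (C : eqType)
  (HASH : C -> seq C -> C) (HASH_inj : hash_injective HASH)
  (k d dG : nat) (Gi Gj : lgraph C)
  (F : (node Gi + node Gj)%type -> 'rV[R]_d)
  (HF : forall u v : (node Gi + node Gj)%type,
      (match u with inl x => wl HASH Gi k x | inr x => wl HASH Gj k x end =
       match v with inl x => wl HASH Gi k x | inr x => wl HASH Gj k x end)
      <-> F u = F v)
  (fG : seq 'rV[R]_d -> 'rV[R]_dG) (HfG : multiset_fun fG) :
  let A := [seq F (inl v) | v <- enum (node Gi)] in
  let B := [seq F (inr v) | v <- enum (node Gj)] in
  (fG A = fG B -> perm_eq A B) ->
  (fG A = fG B <-> perm_eq (wl_multiset HASH Gi k) (wl_multiset HASH Gj k)).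
Proof.
move=> A B fG_inj.
pose c (u : node Gi + node Gj) :=
  match u with inl x => wl HASH Gi k x | inr x => wl HASH Gj k x end.
have -> : wl_multiset HASH Gi k = map c (map inl (enum (node Gi))).
  by rewrite -map_comp.
have -> : wl_multiset HASH Gj k = map c (map inr (enum (node Gj))).
  by rewrite -map_comp.
rewrite (perm_map_same_partition _ _ HF) -!(map_comp F).
by split=> [/fG_inj | /HfG].
Qed.
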